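(* Let $\mathcal{T}$ be an unweighted tree on $L$ vertices with diameter $\mathrm{diam}(\mathcal{T})$, and let $f:\mathbb{N}\to\mathbb{R}$ be an arbitrary function. Then the mask matrix $\mathbf{M} = [f(\mathrm{dist}_{\mathcal{T}}(i,j))]_{i,j=1,\dots,L}$ supports matrix-vector multiplication in time $O(L\cdot\mathrm{diam}(\mathcal{T}))$.
   Context: $\mathrm{dist}_{\mathcal{T}}(i,j)$ is the number of edges on the path between $i$ and $j$; $\mathrm{diam}(\mathcal{T})$ is the maximum of $\mathrm{dist}_{\mathcal{T}}(i,j)$ over all pairs. Values of $f$ are assumed available in $O(1)$ time each; time counts arithmetic operations. *)

From HB Require Import structures.
From mathcomp Require Import all_boot all_order all_algebra.
From mathcomp Require Import reals.
Set Implicit Arguments. Unset Strict Implicit. Unset Printing Implicit Defensive.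
Import Order.TTheory GRing.Theory Num.Theory.
Local Open Scope ring_scope.

Definition simple_graph (L : nat) (e : rel 'I_L) : Prop :=
  symmetric e /\ irreflexive e.

Definition num_edges (L : nat) (e : rel 'I_L) : nat :=
  (#|[set p : 'I_L * 'I_L | e p.1 p.2]| %/ 2)%N.

Definition is_tree (L : nat) (e : rel 'I_L) : Prop :=
  [/\ (0 < L)%N, simple_graph e,
      (forall i j : 'I_L, connect e i j) & num_edges e = L.-1].

Definition walk_of_len (L : nat) (e : rel 'I_L) (i j : 'I_L) (n : nat) : bool :=
  [exists p : n.-tuple 'I_L, path e i p && (last i p == j)].

(* dist e i j = number of edges on a shortest path from i to j
   (in a tree, the number of edges of the unique path). For a connected
   graph on L vertices this is < L; the value L is never reached. *)
Definition dist (L : nat) (e : rel 'I_L) (i j : 'I_L) : nat :=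
  find (walk_of_len e i j) (iota 0 L).

Definition diam (L : nat) (e : rel 'I_L) : nat :=
  (\max_(p : 'I_L * 'I_L) dist e p.1 p.2)%N.

Definition mask_mx (R : nzRingType) (L : nat) (e : rel 'I_L) (f : nat -> R)
  : 'M[R]_L := \matrix_(i, j) f (dist e i j).

(* Each instruction computes one new register value (unit cost).
   Registers are numbered 0,1,2,... in order of creation; references to a
   non-existent register read 0. *)
Inductive instr : Type :=
  | IInput of nat
  | IConstF of nat       (* read the value f(k) (O(1) oracle access)    *)
  | IAdd of nat & nat
  | ISub of nat & nat
  | IMul of nat & nat.

Definition exec_instr (R : nzRingType) (L : nat) (f : nat -> R) (x : 'cV[R]_L)
  (regs : seq R) (c : instr) : R :=
  match c with
  | IInput k => if insub k is Some i then x i ord0 else 0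
  | IConstF k => f k
  | IAdd a b => nth 0 regs a + nth 0 regs b
  | ISub a b => nth 0 regs a - nth 0 regs b
  | IMul a b => nth 0 regs a * nth 0 regs b
  end.

Definition run (R : nzRingType) (L : nat) (f : nat -> R) (x : 'cV[R]_L)
  (prog : seq instr) : seq R :=
  foldl (fun regs c => rcons regs (exec_instr f x regs c)) [::] prog.

From HB Require Import structures.
From mathcomp Require Import all_boot all_order all_algebra.
From mathcomp Require Import reals.
From mathcomp Require Import zify.
Set Implicit Arguments. Unset Strict Implicit. Unset Printing Implicit Defensive.
Import Order.TTheory GRing.Theory Num.Theory.

(* Root the tree at vertex 0.  For a vertex v let D_d(v) be the sum of the x_j over
   the descendants j of v at distance d, and S_d(v) the sum over all j at distance d.
   Then D_0(v) = x_v, D_(d+1)(v) is the sum of D_d over the children of v, and for v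
   other than the root S_d(v) = D_d(v) + S_(d-1)(parent v) - D_(d-2)(v): outside the
   subtree of v, distances from v exceed those from its parent by one, while inside it
   the vertices at distance d-1 from the parent are those at distance d-2 from v.
   Since (M x)_v = sum_(d <= diam) f(d) S_d(v), a straight-line program filling the
   layers d = 0, ..., diam with 7 L registers each computes M x. *)

Section Distance.
Variables (L : nat) (e : rel 'I_L).
Hypothesis e_connected : forall i j : 'I_L, connect e i j.

Lemma walkP (i j : 'I_L) m :
  reflect (exists s : seq 'I_L, [/\ size s = m, path e i s & last i s = j])
          (walk_of_len e i j m).
Proof.
apply: (iffP existsP) => [[t /andP[pt /eqP lt]]|[s [<- ps ls]]].
  by exists t; rewrite size_tuple.
by exists (in_tuple s); rewrite /= ps ls eqxx.
Qed.

Lemma dist_leq_walk i j m : walk_of_len e i j m -> dist e i j <= m.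
Proof.
move=> w; rewrite /dist; case: (ltnP m L) => [mL|Lm].
  rewrite leqNgt; apply/negP => /(before_find 0).
  by rewrite nth_iota // add0n w.
by apply: leq_trans Lm; rewrite -[X in _ <= X](size_iota 0 L) find_size.
Qed.

Lemma dist_walk i j : walk_of_len e i j (dist e i j).
Proof.
case/connectP: (e_connected i j) => p pp ->{j}; case: (shortenP pp) => s ps us _.
set j := last i s.
have sL : size s < L.
  by move/card_uniqP: us => /= <-; rewrite -[X in _ <= X]card_ord max_card.
have ex_walk : has (walk_of_len e i j) (iota 0 L).
  by apply/hasP; exists (size s); [rewrite mem_iota add0n sL | apply/walkP; exists s].
have := nth_find 0 ex_walk; rewrite nth_iota //.
by move: ex_walk; rewrite has_find size_iota.
Qed.

Lemma dist_nn i : dist e i i = 0.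
Proof. by apply/eqP; rewrite -leqn0 dist_leq_walk //; apply/walkP; exists [::]. Qed.

Lemma dist_eq0 i j : dist e i j = 0 -> i = j.
Proof.
have /walkP[s [<- _ <-]] := dist_walk i j.
by move/size0nil ->.
Qed.

Lemma dist_edgel u v j : e u v -> dist e u j <= (dist e v j).+1.
Proof.
move=> uv; have /walkP[s [ss ps ls]] := dist_walk v j.
by apply: dist_leq_walk; apply/walkP; exists (v :: s); rewrite /= ss uv ps.
Qed.

Lemma dist_edger i u v : e u v -> dist e i v <= (dist e i u).+1.
Proof.
move=> uv; have /walkP[s [ss ps ls]] := dist_walk i u.
apply: dist_leq_walk; apply/walkP; exists (rcons s v).
by rewrite size_rcons ss rcons_path ps ls uv last_rcons.
Qed.

Lemma dist_predP i j m : dist e i j = m.+1 -> exists2 w, e w j & dist e i w = m.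
Proof.
move=> dij; have /walkP[s [ss ps ls]] := dist_walk i j.
rewrite dij in ss; case/lastP: s ss ps ls => [//|s y].
rewrite size_rcons rcons_path last_rcons => -[ss] /andP[ps ey] yj; subst y.
exists (last i s) => //; apply/eqP; rewrite eqn_leq.
have -> : dist e i (last i s) <= m by apply: dist_leq_walk; apply/walkP; exists s.
by rewrite -ltnS -dij dist_edger.
Qed.

(* Every walk from w into A passes through v after at least one step. *)
Lemma dist_through_cut (A : pred 'I_L) v w j :
  (forall a b, e a b -> ~~ A a -> A b -> b = v) ->
  ~~ A w -> e w v -> A j -> dist e w j = (dist e v j).+1.
Proof.
move=> cut Aw wv Aj; apply/eqP; rewrite eqn_leq dist_edgel //=.
have /walkP[s [<- ps ls]] := dist_walk w j.
suff [s' [ss' ps' ls']] : exists s', [/\ size s' < size s, path e v s' & last v s' = j].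
  by apply: leq_ltn_trans ss'; apply: dist_leq_walk; apply/walkP; exists s'.
rewrite -{}ls in Aj *; elim: s w Aw ps Aj {wv} => [|b s IHs] a Aa /=.
  by move=> _ Aa'; rewrite Aa' in Aa.
case/andP=> ab ps As; case: (boolP (A b)) => Ab.
  by rewrite -(cut a b ab Aa Ab); exists s; split.
by have [s' [ss' ps' ls']] := IHs b Ab ps As; exists s'; split => //; apply: ltnW.
Qed.

End Distance.

Section PreviousElement.
Variables (m : nat) (P : pred 'I_m).

Definition prev_in (k : nat) : option 'I_m :=
  [pick i | [&& P i, i < k & [forall j, P j && (j < k) ==> (j <= i)]]].

Variant prev_in_spec k : option 'I_m -> Type :=
  | PrevIn i of P i & i < k & (forall j, P j -> j < k -> j <= i) :
      prev_in_spec k (Some i)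
  | NoPrevIn of (forall j, P j -> k <= j) : prev_in_spec k None.

Lemma prev_inP k : prev_in_spec k (prev_in k).
Proof.
rewrite /prev_in; case: pickP => [i /and3P[Pi ik /forallP max_i] | none].
  by constructor => // j Pj jk; have := max_i j; rewrite Pj jk.
constructor => j Pj; rewrite leqNgt; apply/negP => jk.
have [i /andP[Pi ik] max_i] :=
  @arg_maxnP _ j [pred i | P i && (i < k)] val (introT andP (conj Pj jk)).
have /negP[] := none i; rewrite Pi ik; apply/forallP => j'; apply/implyP.
exact: max_i.
Qed.

Variables (V : nmodType) (F : 'I_m -> V).

Local Open Scope ring_scope.

Definition prefix_sum (k : nat) : V := \sum_(i | P i && (i < k)%N) F i.

Lemma prefix_sum_prev k :
  prefix_sum k = if prev_in k is Some i then F i + prefix_sum i else 0.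
Proof.
rewrite /prefix_sum; case: prev_inP => [i Pi ik max_i | none]; last first.
  by rewrite big_pred0 // => j; apply/andP => -[/none]; rewrite leqNgt => /negP.
rewrite (bigD1 i) ?Pi ?ik //=; congr (_ + _); apply: eq_bigl => j.
rewrite -andbA; apply: andb_id2l => Pj; apply/andP/idP => [[jk j_i] | ji].
  by rewrite ltn_neqAle max_i // andbT; apply: contra j_i => /eqP/val_inj ->.
by split; [exact: ltn_trans ik | apply: contraTneq ji => ->; rewrite ltnn].
Qed.

End PreviousElement.

Lemma sum_level_sets (R : pzSemiRingType) (I : finType) (g : I -> nat)
    (f : nat -> R) (x : I -> R) K :
  (forall j, g j < K) ->
  (\sum_(d < K) f d * \sum_(j | g j == d) x j = \sum_j f (g j) * x j)%R.
Proof.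
move=> gK; under eq_bigr do rewrite mulr_sumr.
rewrite (exchange_big_dep predT) //=; apply: eq_bigr => j _.
by rewrite (big_pred1 (Ordinal (gK j))) // => d; rewrite eq_sym -val_eqE.
Qed.

Section StraightLinePrograms.
Variables (R : nzRingType) (L : nat) (f : nat -> R) (x : 'cV[R]_L).
Local Open Scope ring_scope.

Definition reads (c : instr) : seq nat :=
  match c with IAdd a b | ISub a b | IMul a b => [:: a; b] | _ => [::] end.

Definition eval_instr (g : nat -> R) (c : instr) : R :=
  match c with
  | IInput k => if insub k is Some i then x i ord0 else 0
  | IConstF k => f k
  | IAdd a b => g a + g b
  | ISub a b => g a - g b
  | IMul a b => g a * g b
  end.

Lemma exec_instrE regs c : exec_instr f x regs c = eval_instr (nth 0 regs) c.
Proof. by case: c. Qed.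

Lemma eq_eval_instr g1 g2 c :
  {in reads c, g1 =1 g2} -> eval_instr g1 c = eval_instr g2 c.
Proof. by case: c => //= a b g12; rewrite !g12 // !inE eqxx ?orbT. Qed.

Lemma run_rcons p c :
  run f x (rcons p c) = rcons (run f x p) (exec_instr f x (run f x p) c).
Proof. exact: foldl_rcons. Qed.

Lemma size_run p : size (run f x p) = size p.
Proof. by elim/last_ind: p => // p c IHp; rewrite run_rcons !size_rcons IHp. Qed.

Lemma run_computes (p : seq instr) (V : nat -> R) :
  (forall a, (size p <= a)%N -> V a = 0) ->
  (forall k a, (k < size p)%N -> a \in reads (nth (IConstF 0) p k) ->
     (a < k)%N || (size p <= a)%N) ->
  (forall k, (k < size p)%N -> eval_instr V (nth (IConstF 0) p k) = V k) ->
  forall k, (k < size p)%N -> nth 0 (run f x p) k = V k.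
Proof.
move=> V_out reads_lt evalV.
suff prefix m : (m <= size p)%N -> forall k, (k < m)%N -> nth 0 (run f x (take m p)) k = V k.
  by move=> k kp; rewrite -(prefix _ (leqnn _) _ kp) take_size.
elim: m => [//|m IHm] mp k km.
rewrite (take_nth (IConstF 0) mp) run_rcons nth_rcons size_run size_take mp.
rewrite ltnS leq_eqVlt in km; case/orP: km => [/eqP -> | km]; last first.
  by rewrite km; exact: IHm (ltnW mp) _ km.
rewrite ltnn eqxx exec_instrE -evalV //; apply: eq_eval_instr => a /(reads_lt _ _ mp).
case/orP=> [am | pa]; first exact: IHm (ltnW mp) _ am.
by rewrite V_out // nth_default // size_run size_take mp (leq_trans (ltnW mp) pa).
Qed.

End StraightLinePrograms.

Inductive cell_kind := Down | Chain | Partial | Sphere | Coef | Term | Acc.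

Definition kind_rank (k : cell_kind) : nat :=
  match k with
  | Down => 0 | Chain => 1 | Partial => 2 | Sphere => 3 | Coef => 4 | Term => 5 | Acc => 6
  end.

Definition kind_of_rank (r : nat) : cell_kind :=
  match r with
  | 0 => Down | 1 => Chain | 2 => Partial | 3 => Sphere | 4 => Coef | 5 => Term | _ => Acc
  end.

Lemma kind_rankK : cancel kind_rank kind_of_rank. Proof. by case. Qed.

Lemma kind_rank_lt k : kind_rank k < 7. Proof. by case: k. Qed.

Lemma kind_of_rankK r : r < 7 -> kind_rank (kind_of_rank r) = r.
Proof. by do 7?case: r => [//|r]. Qed.

Section Layout.
Variable n : nat.
Local Notation L := n.+1.

Definition cell_pos d k (v : 'I_L) : nat := (7 * d + kind_rank k) * L + v.

Definition cell_layer m := m %/ L %/ 7.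
Definition cell_kind_at m := kind_of_rank (m %/ L %% 7).
Definition cell_vertex m : 'I_L := inord (m %% L).

Lemma cell_pos_row d k v : cell_pos d k v %/ L = 7 * d + kind_rank k.
Proof. by rewrite /cell_pos divnMDl // divn_small // addn0. Qed.

Lemma cell_posK d k v :
  [/\ cell_layer (cell_pos d k v) = d, cell_kind_at (cell_pos d k v) = k
    & cell_vertex (cell_pos d k v) = v].
Proof.
rewrite /cell_layer /cell_kind_at /cell_vertex cell_pos_row.
have rk := kind_rank_lt k.
rewrite [7 * d]mulnC divnMDl // divn_small // addn0 modnMDl modn_small // kind_rankK.
by split => //; apply: val_inj; rewrite /= /cell_pos modnMDl modn_small // inordK.
Qed.

Lemma cell_pos_at m : cell_pos (cell_layer m) (cell_kind_at m) (cell_vertex m) = m.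
Proof.
rewrite /cell_pos /cell_kind_at kind_of_rankK ?ltn_mod // [7 * _]mulnC -divn_eq.
by rewrite /cell_vertex inordK ?ltn_mod // -divn_eq.
Qed.

Lemma cell_pos_lt_row d k v r : 7 * d + kind_rank k < r -> cell_pos d k v < r * L.
Proof.
move=> row_lt; rewrite /cell_pos; set q := 7 * d + kind_rank k.
apply: (@leq_trans (q.+1 * L)); first by rewrite mulSnr ltn_add2l.
by rewrite leq_mul2r row_lt orbT.
Qed.

Lemma cell_pos_lt d k v d' k' v' :
  7 * d + kind_rank k < 7 * d' + kind_rank k' -> cell_pos d k v < cell_pos d' k' v'.
Proof. by move=> row_lt; apply: leq_trans (cell_pos_lt_row v row_lt) _; apply: leq_addr. Qed.

Lemma cell_layer_lt m K : m < 7 * K * L -> cell_layer m < K.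
Proof. by rewrite /cell_layer !ltn_divLR // [K * 7]mulnC. Qed.

End Layout.

Section RootedTree.
Variables (n : nat) (e : rel 'I_n.+1).
Hypotheses (e_sym : symmetric e) (e_irr : irreflexive e).
Hypotheses (e_connected : forall i j : 'I_n.+1, connect e i j) (e_edges : num_edges e = n).

Local Notation root := (ord0 : 'I_n.+1).
Local Notation depth u := (dist e root u).

Definition parent (u : 'I_n.+1) : 'I_n.+1 :=
  if [pick w | e w u && ((depth w).+1 == depth u)] is Some w then w else root.

Definition child (v c : 'I_n.+1) : bool := (c != root) && (parent c == v).

Lemma depth_eq0 u : (depth u == 0) = (u == root).
Proof.
by apply/eqP/eqP => [/(dist_eq0 e_connected) ur | ->]; [rewrite ur | rewrite dist_nn].
Qed.

Lemma parentP u : u != root -> e (parent u) u /\ depth u = (depth (parent u)).+1.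
Proof.
rewrite -depth_eq0 /parent => u_nr; case: pickP => [w /andP[wu /eqP <-] // | none].
case du: (depth u) u_nr => [//|d] _.
have [w wu dw] := dist_predP e_connected du.
by have := none w; rewrite wu dw du eqxx.
Qed.

Definition parent_edges : {set 'I_n.+1 * 'I_n.+1} :=
  [set (parent u, u) | u in [set~ root]] :|: [set (u, parent u) | u in [set~ root]].

Lemma mem_parent_edges a b :
  ((a, b) \in parent_edges) = child a b || child b a.
Proof.
rewrite inE; apply/orP/orP => -[].
- by case/imsetP=> u; rewrite !inE => u_nr [-> ->]; left; rewrite /child u_nr eqxx.
- by case/imsetP=> u; rewrite !inE => u_nr [-> ->]; right; rewrite /child u_nr eqxx.
- by case/andP=> b_nr /eqP <-; left; apply/imsetP; exists b; rewrite ?inE.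
- by case/andP=> a_nr /eqP <-; right; apply/imsetP; exists a; rewrite ?inE.
Qed.

Lemma card_parent_edges : #|parent_edges| = n.*2.
Proof.
have card_n (F : 'I_n.+1 -> 'I_n.+1 * 'I_n.+1) :
    injective F -> #|[set F u | u in [set~ root]]| = n.
  by move=> F_inj; rewrite card_imset // cardsC1 card_ord.
rewrite cardsU !card_n => [|u1 u2 []|u1 u2 []] //.
suff -> : [set (parent u, u) | u in [set~ root]] :&: [set (u, parent u) | u in [set~ root]]
          = set0 by rewrite cards0 subn0 addnn.
apply/setP => -[a b]; rewrite !inE; apply/negP => /andP[].
case/imsetP=> u; rewrite !inE => /parentP[_ du] [-> ->].
case/imsetP=> w; rewrite !inE => /parentP[_ dw] [uw pw].
by move: dw; rewrite -pw -uw; lia.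
Qed.

Lemma edge_parent a b : e a b -> child a b || child b a.
Proof.
move=> ab; rewrite -mem_parent_edges; apply/negPn/negP => ab_n.
have ba_n : (b, a) \notin parent_edges by rewrite mem_parent_edges orbC -mem_parent_edges.
set E := [set p : 'I_n.+1 * 'I_n.+1 | e p.1 p.2].
have card_E : #|E| <= n.*2.+1 by move: e_edges; rewrite /num_edges -/E; lia.
have sub : parent_edges :|: [set (a, b); (b, a)] \subset E.
  apply/subsetP => -[u w]; rewrite in_setU mem_parent_edges !inE /child /=.
  case/orP=> [/orP[] /andP[nr /eqP <-] | /orP[] /eqP[-> ->]] //; last by rewrite e_sym.
  - by case: (parentP nr).
  - by rewrite e_sym; case: (parentP nr).
have ab_ba : (a, b) != (b, a) by apply: contraTneq ab => -[->]; rewrite e_irr.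
have := subset_leq_card sub; rewrite cardsU card_parent_edges cards2 ab_ba /=.
suff -> : parent_edges :&: [set (a, b); (b, a)] = set0.
  by rewrite cards0 subn0 addn2 => /leq_trans/(_ card_E); rewrite ltnn.
apply/setP => p; rewrite in_set0 in_setI in_set2.
by apply/negP => /andP[pP /orP[] /eqP p_eq]; rewrite p_eq ?(negbTE ab_n) ?(negbTE ba_n) in pP.
Qed.

Definition descendant (v j : 'I_n.+1) : bool :=
  (depth v <= depth j) && (iter (depth j - depth v) parent j == v).

Lemma depth_iter_parent j k : k <= depth j -> depth (iter k parent j) = depth j - k.
Proof.
elim: k => [|k IHk] kj; first by rewrite subn0.
have dk := IHk (ltnW kj).
have /parentP[_ dS] : iter k parent j != root by rewrite -depth_eq0 dk; lia.
by rewrite iterS; move: dS; rewrite dk; lia.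
Qed.

Lemma descendant_root j : descendant root j.
Proof.
rewrite /descendant dist_nn subn0 /= -depth_eq0.
by rewrite depth_iter_parent // subnn.
Qed.

Lemma descendant_refl v : descendant v v.
Proof. by rewrite /descendant leqnn subnn eqxx. Qed.

Lemma descendant_parentl c j : c != root -> descendant c j -> descendant (parent c) j.
Proof.
move=> /parentP[_ dc] /andP[cj /eqP jc]; rewrite /descendant.
have -> : depth j - depth (parent c) = (depth j - depth c).+1 by lia.
by rewrite iterS jc eqxx andbT; lia.
Qed.

Lemma descendant_parentr v a : a != root -> descendant v (parent a) -> descendant v a.
Proof.
move=> /parentP[_ da] /andP[va /eqP av]; rewrite /descendant.
have -> : depth a - depth v = (depth (parent a) - depth v).+1 by lia.
by rewrite iterSr av eqxx andbT; lia.
Qed.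

Lemma parent_not_descendant v : v != root -> ~~ descendant v (parent v).
Proof. by case/parentP=> _ dv; apply/negP => /andP[]; lia. Qed.

Lemma descendant_lt_depth v j : descendant v j -> j != v -> depth v < depth j.
Proof.
case/andP=> vj /eqP jv j_v; rewrite ltn_neqAle vj andbT.
by apply: contra j_v => /eqP dv; rewrite -jv -dv subnn.
Qed.

Lemma proper_descendant_parent v j : descendant v j -> j != v -> descendant v (parent j).
Proof.
move=> vj j_v; have dvj := descendant_lt_depth vj j_v.
have /parentP[_ dj] : j != root by rewrite -depth_eq0 -lt0n (leq_ltn_trans _ dvj).
case/andP: vj => _; rewrite /descendant.
have -> : depth j - depth v = (depth (parent j) - depth v).+1 by lia.
by rewrite iterSr => ->; rewrite andbT; lia.
Qed.

Lemma edge_into_subtree v a b : v != root -> e a b ->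
  ~~ descendant v a -> descendant v b -> a = parent v /\ b = v.
Proof.
move=> v_nr ab va vb; case/orP: (edge_parent ab) => /andP[nr /eqP p_eq].
  case: (eqVneq b v) => [bv | b_v]; first by rewrite -p_eq bv.
  by case/negP: va; rewrite -p_eq proper_descendant_parent.
by case/negP: va; apply: descendant_parentr nr _; rewrite p_eq.
Qed.

Lemma dist_parent_descendant v j : v != root -> descendant v j ->
  dist e (parent v) j = (dist e v j).+1.
Proof.
move=> v_nr vj; have [pv_v _] := parentP v_nr.
apply: (dist_through_cut e_connected (A := descendant v)) => //.
- by move=> a b ab va vb; case: (edge_into_subtree v_nr ab va vb).
- exact: parent_not_descendant.
Qed.

Lemma dist_parent_nondescendant v j : v != root -> ~~ descendant v j ->
  dist e v j = (dist e (parent v) j).+1.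
Proof.
move=> v_nr vj; have [pv_v _] := parentP v_nr.
apply: (dist_through_cut e_connected (A := predC (descendant v))) => /=.
- move=> a b ab /negPn va vb; rewrite e_sym in ab.
  by case: (edge_into_subtree v_nr ab vb va).
- by rewrite negbK descendant_refl.
- by rewrite e_sym.
- by [].
Qed.

Lemma child_descendant_unique v c1 c2 j : child v c1 -> child v c2 ->
  descendant c1 j -> descendant c2 j -> c1 = c2.
Proof.
case/andP=> /parentP[_ d1] /eqP p1 /andP[/parentP[_ d2] /eqP p2].
case/andP=> _ /eqP <- /andP[_ /eqP <-].
by rewrite d1 d2 p1 p2.
Qed.

Lemma descendant_child v j : descendant v j -> j != v ->
  exists2 c, child v c & descendant c j.
Proof.
move=> vj j_v; have dvj := descendant_lt_depth vj j_v; case/andP: vj => _ /eqP jv.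
set k := (depth j - depth v).-1.
have dc : depth (iter k parent j) = (depth v).+1 by rewrite depth_iter_parent /k; lia.
have c_nr : iter k parent j != root by rewrite -depth_eq0 dc.
exists (iter k parent j).
  by rewrite /child c_nr -iterS /k prednK ?subn_gt0 // jv /=.
rewrite /descendant dc; have -> : depth j - (depth v).+1 = k by rewrite /k; lia.
by rewrite eqxx andbT.
Qed.

Section SphereSums.
Variables (R : zmodType) (x : 'I_n.+1 -> R).
Local Open Scope ring_scope.

Definition down_sum d v := \sum_(j | (dist e v j == d) && descendant v j) x j.
Definition sphere_sum d v := \sum_(j | dist e v j == d) x j.

Lemma down_sum0 v : down_sum 0 v = x v.
Proof.
rewrite /down_sum (big_pred1 v) // => j /=.
apply/andP/eqP => [[/eqP/(dist_eq0 e_connected) ->] // | ->].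
by rewrite dist_nn descendant_refl.
Qed.

Lemma down_sumS d v : down_sum d.+1 v = \sum_(c | child v c) down_sum d c.
Proof.
symmetry; rewrite /down_sum.
rewrite (exchange_big_dep [pred j | (dist e v j == d.+1) && descendant v j]) /=.
  apply: eq_bigr => j /andP[/eqP dvj vj].
  have j_v : j != v by apply/eqP => jv; move: dvj; rewrite jv dist_nn.
  have [c vc cj] := descendant_child vj j_v.
  rewrite (big_pred1 c) // => c'; apply/and3P/eqP => [[vc' _ c'j] | ->].
    exact: child_descendant_unique vc' vc c'j cj.
  have /andP[c_nr /eqP pc] := vc.
  by split => //; rewrite -eqSS -dvj -pc dist_parent_descendant.
move=> c j /andP[c_nr /eqP <-] /andP[/eqP <- cj].
by rewrite dist_parent_descendant // eqxx descendant_parentl.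
Qed.

Lemma sphere_sum_root d : sphere_sum d root = down_sum d root.
Proof. by apply: eq_bigl => j; rewrite descendant_root andbT. Qed.

Lemma sphere_sum0 v : sphere_sum 0 v = down_sum 0 v.
Proof.
apply: eq_bigl => j; apply/idP/andP => [/eqP dvj | [] //].
by rewrite -(dist_eq0 e_connected dvj) dist_nn descendant_refl.
Qed.

Lemma sphere_sum_parent d v : v != root ->
  sphere_sum d.+1 v =
  down_sum d.+1 v + sphere_sum d (parent v) - (if d is d'.+1 then down_sum d' v else 0).
Proof.
move=> v_nr; rewrite /sphere_sum (bigID (descendant v)) /=.
rewrite [in RHS](bigID (descendant v)) /= -/(down_sum d.+1 v).
have -> : \sum_(j | (dist e (parent v) j == d) && descendant v j) x j =
          if d is d'.+1 then down_sum d' v else 0.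
  case: d => [|d]; last first.
    by apply: eq_bigl => j; apply: andb_id2r => vj; rewrite dist_parent_descendant.
  by rewrite big_pred0 // => j; apply/andP => -[]; case: (boolP (descendant v j)) => // vj;
    rewrite dist_parent_descendant.
have -> : \sum_(j | (dist e v j == d.+1) && ~~ descendant v j) x j =
          \sum_(j | (dist e (parent v) j == d) && ~~ descendant v j) x j.
  by apply: eq_bigl => j; apply: andb_id2r => vj; rewrite dist_parent_nondescendant.
by rewrite addrCA [_ + (_ + _)]addrC addrK.
Qed.

Lemma sphere_sumE d v : sphere_sum d v =
  down_sum d v
  + (if (v != root) && (0 < d)%N then sphere_sum d.-1 (parent v) else 0)
  - (if (v != root) && (1 < d)%N then down_sum d.-2 v else 0).
Proof.
case: eqVneq => [->|v_nr] /=; first by rewrite addr0 subr0 sphere_sum_root.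
case: d => [|d]; first by rewrite addr0 subr0 sphere_sum0.
by rewrite sphere_sum_parent //; case: d.
Qed.

End SphereSums.

Section MaskProgram.
Variable D : nat.

(* This is the size of [mask_prog], so the register it names reads 0. *)
Definition zero_reg : nat := 7 * D.+1 * n.+1.

Definition chain_ref d (P : pred 'I_n.+1) k : nat :=
  if prev_in P k is Some c then cell_pos d Chain c else zero_reg.

(* Chain d c sums Down d over c and its siblings of smaller index, so that the sum
   over the children of v is read off the chain cell of its last child: each layer
   costs O(L) instructions. *)
Definition cell_instr d k (v : 'I_n.+1) : instr :=
  match k with
  | Down => if d is d'.+1 then IAdd (chain_ref d' (child v) n.+1) zero_reg else IInput v
  | Chain => IAdd (cell_pos d Down v) (chain_ref d (child (parent v)) v)
  | Partial => IAdd (cell_pos d Down v)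
      (if (v != root) && (0 < d) then cell_pos d.-1 Sphere (parent v) else zero_reg)
  | Sphere => ISub (cell_pos d Partial v)
      (if (v != root) && (1 < d) then cell_pos d.-2 Down v else zero_reg)
  | Coef => IConstF d
  | Term => IMul (cell_pos d Coef v) (cell_pos d Sphere v)
  | Acc => IAdd (if d is d'.+1 then cell_pos d' Acc v else zero_reg) (cell_pos d Term v)
  end.

Definition mask_prog : seq instr :=
  mkseq (fun m => cell_instr (cell_layer n m) (cell_kind_at n m) (cell_vertex n m)) zero_reg.

Lemma size_mask_prog : size mask_prog = zero_reg.
Proof. exact: size_mkseq. Qed.

Lemma cell_pos_lt_zero_reg d k (v : 'I_n.+1) : d <= D -> cell_pos d k v < zero_reg.
Proof. by move=> dD; apply: cell_pos_lt_row; have := kind_rank_lt k; lia. Qed.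

Lemma reads_cell_instr d k (v : 'I_n.+1) a : d <= D -> a \in reads (cell_instr d k v) ->
  (a < cell_pos d k v) || (zero_reg <= a).
Proof.
move=> dD.
have chain_ok (P : pred 'I_n.+1) k' d' p :
    (forall c : 'I_n.+1, P c -> c < k' -> cell_pos d' Chain c < p) ->
    (chain_ref d' P k' < p) || (zero_reg <= chain_ref d' P k').
  by move=> lt; rewrite /chain_ref; case: prev_inP => [c Pc ck _ | _]; rewrite ?lt ?leqnn ?orbT.
case: k => /=; rewrite ?inE.
- case: d dD => [|d] dD //=; rewrite !inE => /orP[] /eqP ->; rewrite ?leqnn ?orbT //.
  by apply: chain_ok => c _ _; rewrite cell_pos_lt //=; lia.
- case/orP=> /eqP ->; first by rewrite cell_pos_lt //=; lia.
  by apply: chain_ok => c _ cv; rewrite /cell_pos ltn_add2l.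
- case/orP=> /eqP ->; first by rewrite cell_pos_lt //=; lia.
  by case: ifP => [/andP[_ d_gt0] | _]; rewrite ?leqnn ?orbT // cell_pos_lt //=; lia.
- case/orP=> /eqP ->; first by rewrite cell_pos_lt //=; lia.
  by case: ifP => [/andP[_ d_gt1] | _]; rewrite ?leqnn ?orbT // cell_pos_lt //=; lia.
- by [].
- by case/orP=> /eqP ->; rewrite cell_pos_lt //=; lia.
- case: d dD => [|d] dD /=; case/orP=> /eqP ->; rewrite ?leqnn ?orbT //;
    by rewrite cell_pos_lt //=; lia.
Qed.

Section Values.
Variables (R : nzRingType) (f : nat -> R) (x : 'cV[R]_n.+1).
Local Notation xv := (fun j => x j ord0).
Local Open Scope ring_scope.

Definition cell_val d k (v : 'I_n.+1) : R :=
  match k with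
  | Down => down_sum xv d v
  | Chain => down_sum xv d v + prefix_sum (child (parent v)) (down_sum xv d) v
  | Partial => down_sum xv d v
      + (if (v != root) && (0 < d)%N then sphere_sum xv d.-1 (parent v) else 0)
  | Sphere => sphere_sum xv d v
  | Coef => f d
  | Term => f d * sphere_sum xv d v
  | Acc => \sum_(d' < d.+1) f d' * sphere_sum xv d' v
  end.

Definition reg_val m : R :=
  if (m < zero_reg)%N then cell_val (cell_layer n m) (cell_kind_at n m) (cell_vertex n m)
  else 0.

Lemma reg_val_cell d k v : (d <= D)%N -> reg_val (cell_pos d k v) = cell_val d k v.
Proof.
by move=> dD; rewrite /reg_val cell_pos_lt_zero_reg //; case: (cell_posK d k v) => -> -> ->.
Qed.

Lemma reg_val_out m : (zero_reg <= m)%N -> reg_val m = 0.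
Proof. by rewrite /reg_val leqNgt => /negbTE ->. Qed.

Lemma reg_val_chain_ref d w k : (d <= D)%N ->
  reg_val (chain_ref d (child w) k) = prefix_sum (child w) (down_sum xv d) k.
Proof.
move=> dD; rewrite /chain_ref prefix_sum_prev; case: prev_inP => [c wc _ _ | _].
  by rewrite reg_val_cell //=; case/andP: wc => _ /eqP ->.
exact: reg_val_out.
Qed.

Lemma eval_cell_instr d k v : (d <= D)%N ->
  eval_instr f x reg_val (cell_instr d k v) = cell_val d k v.
Proof.
move=> dD; have d_pred : (d.-1 <= D)%N by apply: leq_trans (leq_pred d) dD.
case: k => /=.
- case: d dD {d_pred} => [|d] dD /=; first by rewrite valK down_sum0.
  rewrite reg_val_chain_ref 1?ltnW // reg_val_out // addr0 down_sumS.
  by apply: eq_bigl => c; rewrite ltn_ord andbT.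
- by rewrite reg_val_cell // reg_val_chain_ref.
- rewrite reg_val_cell //; case: ifP => _; last by rewrite reg_val_out.
  by rewrite reg_val_cell.
- rewrite reg_val_cell // [RHS]sphere_sumE; congr (_ - _).
  case: ifP => _; last by rewrite reg_val_out.
  by rewrite reg_val_cell // (leq_trans (leq_pred _) d_pred).
- by [].
- by rewrite !reg_val_cell.
- rewrite reg_val_cell //; case: d dD {d_pred} => [|d] dD.
    by rewrite reg_val_out // add0r big_ord1.
  by rewrite reg_val_cell 1?ltnW // [in RHS]big_ord_recr.
Qed.

Lemma run_mask_prog d k v : (d <= D)%N ->
  nth 0 (run f x mask_prog) (cell_pos d k v) = cell_val d k v.
Proof.
move=> dD; rewrite -reg_val_cell //.
apply: run_computes; rewrite size_mask_prog ?cell_pos_lt_zero_reg //.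
- exact: reg_val_out.
- move=> m a m_lt; rewrite nth_mkseq //.
  have := @reads_cell_instr (cell_layer n m) (cell_kind_at n m) (cell_vertex n m) a.
  rewrite cell_pos_at; apply.
  by rewrite -ltnS; apply: cell_layer_lt.
- move=> m m_lt; rewrite nth_mkseq // eval_cell_instr /reg_val ?m_lt //.
  by rewrite -ltnS; apply: cell_layer_lt.
Qed.

End Values.

End MaskProgram.
End RootedTree.

Lemma layers_size_bound L D : 7 * D.+1 * L <= 14 * L * maxn 1 D.
Proof. by rewrite /maxn; case: ltnP => D_le; nia. Qed.

Local Open Scope ring_scope.
Theorem lemma6p2 (R : realType) :
  exists C : nat,
  forall (L : nat) (e : rel 'I_L),
    is_tree e ->
    exists (prog : seq instr) (out : 'I_L -> nat),
      (size prog <= C * L * maxn 1 (diam e))%N /\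
      forall (f : nat -> R) (x : 'cV[R]_L) (i : 'I_L),
        nth 0 (run f x prog) (out i) = (mask_mx e f *m x) i ord0.
Proof.
exists 14%N => L e [L_gt0 [e_sym e_irr] e_connected e_edges].
case: L L_gt0 e e_sym e_irr e_connected e_edges => // n _ e e_sym e_irr e_connected e_edges.
exists (mask_prog e (diam e)), (fun i => cell_pos (diam e) Acc i).
split; first by rewrite size_mask_prog layers_size_bound.
move=> f x i; rewrite run_mask_prog //= /sphere_sum.
rewrite (sum_level_sets (g := dist e i)) => [|j]; last first.
  by rewrite ltnS; apply: (leq_bigmax_cond (i, j)).
by rewrite !mxE; apply: eq_bigr => j _; rewrite mxE.
Qed.
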